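(* Let $n\ge 2$, fix $\beta\in\partial\mathbb{D}$ and $\{\alpha_j\}_{j=0}^{n-2}\in\mathbb{D}^{n-1}$. Let $C_n(z)=C_n(z;\{\alpha_j\}_{j=0}^{n-2},\beta)$ and $S_n(z)=S_n(z;\{\alpha_j\}_{j=0}^{n-2},\beta)$, and let $C_{n-1}(z)=C_{n-1}(z;\{\alpha_{j+1}\}_{j=0}^{n-3},\beta)$ and $S_{n-1}(z)=S_{n-1}(z;\{\alpha_{j+1}\}_{j=0}^{n-3},\beta)$ be the corresponding functions with $\alpha_0$ removed. Then \[ C_n(z)=z\bigl(C_{n-1}(z)-\alpha_0S_{n-1}(z)\bigr),\qquad S_n(z)=-\bar\alpha_0C_{n-1}(z)+S_{n-1}(z). \]
   Context: For Verblunsky coefficients $\alpha_0,\alpha_1,\dots\in\mathbb{D}$ the monic orthogonal polynomials on the unit circle satisfy $\Phi_0=1$, $\Phi_{k+1}(z)=z\Phi_k(z)-\bar\alpha_k\Phi_k^*(z)$ with $\Phi_k^*(z)=z^k\overline{\Phi_k(1/\bar z)}$; the second kind polynomials $\Psi_k$ satisfy the same recursion with each $\alpha_j$ replaced by $-\alpha_j$. For $m\ge1$ and $\beta\in\partial\mathbb{D}$, $P_m(z;\{\alpha_j\}_{j=0}^{m-2},\beta)=z\Phi_{m-1}(z)-\bar\beta\Phi_{m-1}^*(z)$ and $Q_m(z;\{\alpha_j\}_{j=0}^{m-2},\beta)=z\Psi_{m-1}(z)+\bar\beta\Psi_{m-1}^*(z)$ (with $\Phi_{m-1},\Psi_{m-1}$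 built from $\alpha_0,\dots,\alpha_{m-2}$), and $C_m=\tfrac12(P_m+Q_m)$, $S_m=\tfrac12(P_m-Q_m)$. *)

From HB Require Import structures.
From mathcomp Require Import all_boot all_order all_algebra.
From mathcomp Require Import complex.
Set Implicit Arguments. Unset Strict Implicit. Unset Printing Implicit Defensive.
Import Order.TTheory GRing.Theory Num.Theory.
Local Open Scope ring_scope.

Section OPUC.
Variable C : numClosedFieldType.

(* reversed polynomial of degree k: p^*(z) = z^k conj(p(1/conj z)),
   i.e. the polynomial whose i-th coefficient is conj(p_{k-i}). *)
Definition rev_star (k : nat) (p : {poly C}) : {poly C} :=
  \poly_(i < k.+1) (p`_(k - i))^*.

Fixpoint Phi (alpha : nat -> C) (k : nat) : {poly C} :=
  match k with
  | 0 => 1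
  | k'.+1 => 'X * Phi alpha k' - (alpha k')^* *: rev_star k' (Phi alpha k')
  end.

Definition Psi (alpha : nat -> C) (k : nat) : {poly C} :=
  Phi (fun j => - alpha j) k.

(* P_m(z; {alpha_j}_{j=0}^{m-2}, beta) and Q_m (m >= 1) *)
Definition Ppol (m : nat) (alpha : nat -> C) (beta : C) : {poly C} :=
  'X * Phi alpha m.-1 - beta^* *: rev_star m.-1 (Phi alpha m.-1).
Definition Qpol (m : nat) (alpha : nat -> C) (beta : C) : {poly C} :=
  'X * Psi alpha m.-1 + beta^* *: rev_star m.-1 (Psi alpha m.-1).

Definition Cpol m alpha beta : {poly C} := 2^-1 *: (Ppol m alpha beta + Qpol m alpha beta).
Definition Spol m alpha beta : {poly C} := 2^-1 *: (Ppol m alpha beta - Qpol m alpha beta).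

End OPUC.

From mathcomp Require Import all_boot all_order all_algebra.
From mathcomp Require Import complex.
From mathcomp Require Import ring.
Import Order.TTheory GRing.Theory Num.Theory.
Local Open Scope ring_scope.

(* The Szego recursion says that (Phi_k, Phi_k^* ) is obtained from (1, 1) by
   the transfer maps T(a) (u, v) = (z u - conj a v, - a z u + v) for
   a = alpha_0, ..., alpha_(k-1); replacing alpha by - alpha amounts to starting
   from (1, -1) and negating the second component.  Hence P_m and Q_m are the
   form (u, v) |-> z u - conj beta v evaluated on the transfer product applied
   to (1, 1) and (1, -1), so by linearity C_m and S_m are that form evaluated on
   the images of (1, 0) and (0, 1).  Peeling off the first map T(alpha_0), which
   sends (1, 0) to (z, - alpha_0 z) and (0, 1) to (- conj alpha_0, 1), gives
   both identities. *)

Section Szego.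
Variable C : numClosedFieldType.
Implicit Types (alpha : nat -> C) (a beta : C) (p q : {poly C}).

Lemma rev_starB k p q : rev_star k (p - q) = rev_star k p - rev_star k q.
Proof.
apply/polyP => i; rewrite /rev_star coefB !coef_poly.
by case: ifP => _; rewrite ?subr0 // coefB rmorphB.
Qed.

Lemma rev_starZ k a p : rev_star k (a *: p) = a^* *: rev_star k p.
Proof.
apply/polyP => i; rewrite /rev_star coefZ !coef_poly.
by case: ifP => _; rewrite ?mulr0 // coefZ rmorphM.
Qed.

Lemma rev_starK k p : (size p <= k.+1)%N -> rev_star k (rev_star k p) = p.
Proof.
move=> le_p_k; apply/polyP => i; rewrite /rev_star !coef_poly.
case: ltnP => [lt_ik | le_ki]; last by rewrite nth_default // (leq_trans le_p_k).
have lt_ki : (k - i < k.+1)%N by rewrite ltnS leq_subr.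
by rewrite lt_ki conjCK subKn // -ltnS.
Qed.

Lemma rev_starS k p : (size p <= k.+1)%N -> rev_star k.+1 p = 'X * rev_star k p.
Proof.
move=> le_p_k; apply/polyP => i; rewrite /rev_star coefXM !coef_poly.
case: i => [|i]; first by rewrite subn0 nth_default ?rmorph0.
by rewrite eqn0Ngt ltn0Sn.
Qed.

Lemma rev_star_mulX k p : (size p <= k.+1)%N -> rev_star k.+1 ('X * p) = rev_star k p.
Proof.
move=> le_p_k; apply/polyP => i; rewrite /rev_star !coef_poly coefXM.
case: (ltnP i k.+1) => [lt_ik | le_ki]; first by rewrite ltnW // subSn.
case: ifP => // lt_ik.
have -> : i = k.+1 by apply/eqP; rewrite eqn_leq le_ki -ltnS lt_ik.
by rewrite subnn rmorph0.
Qed.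

Lemma size_Phi_le alpha k : (size (Phi alpha k) <= k.+1)%N.
Proof.
elim: k => [|k IHk] /=; first by rewrite size_poly1.
apply: leq_trans (size_polyD _ _) _; rewrite geq_max size_polyN.
apply/andP; split.
  by apply: leq_trans (size_polyMleq _ _) _; rewrite size_polyX.
exact: leq_trans (size_scale_leq _ _) (leq_trans (size_poly _ _) (leqnSn _)).
Qed.

Definition szego_step a (w : {poly C} * {poly C}) : {poly C} * {poly C} :=
  ('X * w.1 - a^*%:P * w.2, - (a%:P * 'X) * w.1 + w.2).

Fixpoint szego_iter alpha k w :=
  if k is k'.+1 then szego_step (alpha k') (szego_iter alpha k' w) else w.

Lemma szego_iter_shift alpha k w :
  szego_iter alpha k.+1 w = szego_iter (fun j => alpha j.+1) k (szego_step (alpha 0%N) w).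
Proof. by elim: k => [//|k /= <-]. Qed.

Lemma szego_iter_linear alpha k u v :
  let e1 := szego_iter alpha k (1, 0) in let e2 := szego_iter alpha k (0, 1) in
  szego_iter alpha k (u, v) = (u * e1.1 + v * e2.1, u * e1.2 + v * e2.2).
Proof.
elim: k => [|k IHk] /=; first by rewrite !mulr1 !mulr0 addr0 add0r.
by rewrite IHk /szego_step /=; congr pair; ring.
Qed.

Lemma szego_iter_opp alpha k u v (nalpha := fun j => - alpha j) :
  szego_iter alpha k (u, - v) =
    ((szego_iter nalpha k (u, v)).1, - (szego_iter nalpha k (u, v)).2).
Proof.
elim: k => [//|k /= ->]; rewrite /szego_step /= rmorphN !polyCN.
by congr pair; ring.
Qed.

Lemma Phi_szego alpha k :
  (Phi alpha k, rev_star k (Phi alpha k)) = szego_iter alpha k (1, 1).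
Proof.
elim: k => [|k /= <-].
  congr pair; apply/polyP => -[|i]; rewrite coef_poly coef1 //=.
  by rewrite conjC1.
rewrite /szego_step /= rev_starB rev_starZ rev_star_mulX ?size_Phi_le //.
rewrite rev_starS ?size_poly // rev_starK ?size_Phi_le // conjCK -!mul_polyC.
by congr pair; ring.
Qed.

Lemma Psi_szego alpha k :
  (Psi alpha k, - rev_star k (Psi alpha k)) = szego_iter alpha k (1, -1).
Proof. by rewrite szego_iter_opp -Phi_szego. Qed.

Definition Pform beta (w : {poly C} * {poly C}) : {poly C} :=
  'X * w.1 - beta^*%:P * w.2.

Lemma Ppol_szego m alpha beta :
  Ppol m alpha beta = Pform beta (szego_iter alpha m.-1 (1, 1)).
Proof. by rewrite -Phi_szego /Ppol /Pform /= mul_polyC. Qed.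

Lemma Qpol_szego m alpha beta :
  Qpol m alpha beta = Pform beta (szego_iter alpha m.-1 (1, -1)).
Proof. by rewrite -Psi_szego /Qpol /Pform /= mul_polyC scalerN opprK. Qed.

Lemma half_double (V : lmodType C) (x : V) : 2^-1 *: (x *+ 2) = x.
Proof. by rewrite -scaler_nat scalerA mulVf ?scale1r ?pnatr_eq0. Qed.

Lemma Cpol_szego m alpha beta :
  Cpol m alpha beta = Pform beta (szego_iter alpha m.-1 (1, 0)).
Proof.
rewrite /Cpol Ppol_szego Qpol_szego -[RHS]half_double.
rewrite [szego_iter _ _ (1, 1)]szego_iter_linear [szego_iter _ _ (1, -1)]szego_iter_linear.
by rewrite /Pform /=; congr (_ *: _); ring.
Qed.

Lemma Spol_szego m alpha beta :
  Spol m alpha beta = Pform beta (szego_iter alpha m.-1 (0, 1)).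
Proof.
rewrite /Spol Ppol_szego Qpol_szego -[RHS]half_double.
rewrite [szego_iter _ _ (1, 1)]szego_iter_linear [szego_iter _ _ (1, -1)]szego_iter_linear.
by rewrite /Pform /=; congr (_ *: _); ring.
Qed.

Lemma Cpol_Spol_peel m alpha beta (alpha' := fun j => alpha j.+1) :
  Cpol m.+2 alpha beta =
    'X * (Cpol m.+1 alpha' beta - alpha 0%N *: Spol m.+1 alpha' beta)
  /\ Spol m.+2 alpha beta =
    - (alpha 0%N)^* *: Cpol m.+1 alpha' beta + Spol m.+1 alpha' beta.
Proof.
rewrite !Cpol_szego !Spol_szego !szego_iter_shift /szego_step /=.
rewrite !(szego_iter_linear _ _ (_ - _)) /Pform /= -!mul_polyC polyCN.
by split; ring.
Qed.

End Szego.

Theorem theorem4p2 (R : rcfType) (n : nat) (alpha : nat -> R[i]) (beta : R[i]) :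
  (2 <= n)%N ->
  (forall j : nat, (j <= n - 2)%N -> `|alpha j| < 1) ->
  `|beta| = 1 ->
  Cpol n alpha beta =
    'X * (Cpol n.-1 (fun j => alpha j.+1) beta
          - alpha 0%N *: Spol n.-1 (fun j => alpha j.+1) beta)
  /\ Spol n alpha beta =
    - (alpha 0%N)^* *: Cpol n.-1 (fun j => alpha j.+1) beta
    + Spol n.-1 (fun j => alpha j.+1) beta.
Proof.
by case: n => [|[|m]] // _ _ _; apply: Cpol_Spol_peel.
Qed.
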